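(* Let $X$ be a nonempty set, $\circ:X\times X\to X$ a binary operation, and $p,q>0$ constants. Let $n\geq 1$ and let $f_1,\dots,f_n:X\to\mathbb{R}$ be $(\circ,p,q)$-convex functions such that \[ 0\leq \max(f_1(x),\dots,f_n(x))\qquad (x\in X). \] Then there exist $\lambda_1,\dots,\lambda_n\geq 0$ with $\lambda_1+\dots+\lambda_n=1$ such that \[ 0\leq \lambda_1 f_1(x)+\dots+\lambda_n f_n(x)\qquad (x\in X). \]
   Context: Given a nonempty set $X$, a binary operation $\circ:X\times X\to X$ and constants $p,q>0$, a function $f:X\to\mathbb{R}$ is called $(\circ,p,q)$-convex if $f(x\circ y)\leq p f(x)+q f(y)$ for all $x,y\in X$. *)

From Stdlib Require Import Reals.
Open Scope R_scope.

Definition opq_convex {X : Type} (op : X -> X -> X) (p q : R) (f : X -> R) : Prop :=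
  forall x y : X, f (op x y) <= p * f x + q * f y.

(* max (g 0, ..., g (n-1)) for n >= 1 (indices 0..n-1). *)
Fixpoint maxn_R (g : nat -> R) (n : nat) : R :=
  match n with
  | O => g O
  | S O => g O
  | S m => Rmax (maxn_R g m) (g m)
  end.

(** Iterating the operation from two points x, y
    produces points z with (g z, h z) <= A (g x, h x) + B (g y, h y)
    componentwise, for a set of weights (A, B) whose directions A / (A + B)
    are dense in [0, 1]: after N steps they contain a grid of mesh
    max (p, q) ^ N on the segment A + B = (p + q) ^ N.  Since
    max (g, h) >= 0 everywhere, no convex combination of two value vectors
    (g x, h x), (g y, h y) can then lie in the open negative quadrant, and a
    supremum argument yields a separating weight a with a g + (1 - a) h >= 0.
    For n + 1 functions, the set where f_n < 0 is again closed under the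
    operation; by induction some convex combination g of f_0, ..., f_(n-1)
    is nonnegative there, so max (g, f_n) >= 0 everywhere and the
    two-function case combines g with f_n. *)

From Stdlib Require Import Reals Lra Lia Psatz.
Open Scope R_scope.

Lemma affine_neg_near (u v s : R) :
  s * u + (1 - s) * v < 0 ->
  exists d, 0 < d /\ forall t, Rabs (t - s) <= d -> t * u + (1 - t) * v < 0.
Proof.
  intros Hs.
  set (K := Rabs (u - v)).
  assert (HK : 0 <= K) by apply Rabs_pos.
  set (d := - (s * u + (1 - s) * v) / (K + 1)).
  assert (Hd : 0 < d) by (apply Rdiv_lt_0_compat; lra).
  assert (Ed : d * K + d = - (s * u + (1 - s) * v)) by (unfold d; field; lra).
  exists d; split; [exact Hd|].
  intros t Ht.
  assert (Hprod : (t - s) * (u - v) <= Rabs (t - s) * K)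
    by (unfold K; rewrite <- Rabs_mult; apply Rle_abs).
  assert (Hle : Rabs (t - s) * K <= d * K) by (apply Rmult_le_compat_r; lra).
  replace (t * u + (1 - t) * v) with (s * u + (1 - s) * v + (t - s) * (u - v))
    by ring.
  lra.
Qed.

Lemma quadrant_ratio_le (a b c d : R) :
  0 <= a -> b < 0 -> c < 0 -> 0 <= d ->
  (forall s, 0 <= s <= 1 -> ~ (s * a + (1 - s) * c < 0 /\ s * b + (1 - s) * d < 0)) ->
  - b / (a - b) <= d / (d - c).
Proof.
  intros Ha Hb Hc Hd Hseg.
  set (r := - b / (a - b)); set (u := d / (d - c)).
  assert (Er : r * (a - b) = - b) by (unfold r; field; lra).
  assert (Eu : u * (d - c) = d) by (unfold u; field; lra).
  apply Rnot_lt_le; intros Hlt.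
  assert (Hcross : d * a < b * c).
  { assert ((r - u) * ((a - b) * (d - c)) > 0)
      by (apply Rmult_gt_0_compat; [lra | apply Rmult_gt_0_compat; lra]).
    nra. }
  (* Along the segment from (c, d) to (a, b), the first coordinate is negative
     before s1 and the second one after s2; [Hcross] says s2 < s1. *)
  set (s1 := - c / (a - c)); set (s2 := d / (d - b)).
  assert (E1 : s1 * (a - c) = - c) by (unfold s1; field; lra).
  assert (E2 : s2 * (d - b) = d) by (unfold s2; field; lra).
  assert (Hs : s2 < s1).
  { assert ((s1 - s2) * ((a - c) * (d - b)) > 0) by nra.
    assert ((a - c) * (d - b) > 0) by (apply Rmult_gt_0_compat; lra).
    nra. }
  apply (Hseg ((s1 + s2) / 2)); [split; nra | split; nra].
Qed.

Lemma sup_between (L U : R -> Prop) :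
  (forall l, L l -> l <= 1) -> (forall u, U u -> 0 <= u) ->
  (forall l u, L l -> U u -> l <= u) ->
  exists a, 0 <= a <= 1 /\ (forall l, L l -> l <= a) /\ (forall u, U u -> a <= u).
Proof.
  intros HL1 HU0 HLU.
  set (E := fun r => r = 0 \/ L r).
  destruct (completeness E) as [a [Hub Hlub]].
  - exists 1; intros r [->|Hr]; [lra | auto].
  - exists 0; now left.
  - exists a; repeat split.
    + apply Hub; now left.
    + apply Hlub; intros r [->|Hr]; [lra | auto].
    + intros l Hl; apply Hub; now right.
    + intros u Hu; apply Hlub; intros r [->|Hr]; auto.
Qed.

Section Weights.

Variables (p q : R) (hp : 0 < p) (hq : 0 < q).
Variable S : R -> R -> Prop.
Hypotheses (S10 : S 1 0) (S01 : S 0 1).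
Hypothesis S_mix : forall a b c d, S a b -> S c d -> S (p * a + q * c) (p * b + q * d).

Lemma weights_mix a b c d a' b' :
  S a b -> S c d -> a' = p * a + q * c -> b' = p * b + q * d -> S a' b'.
Proof. intros Sab Scd -> ->; now apply S_mix. Qed.

Lemma weights_scaled_axes N : S ((p + q) ^ N) 0 /\ S 0 ((p + q) ^ N).
Proof.
  induction N as [|N [IH1 IH2]]; simpl; [now split|].
  split.
  - eapply (weights_mix _ _ _ _ _ _ IH1 IH1); ring.
  - eapply (weights_mix _ _ _ _ _ _ IH2 IH2); ring.
Qed.

Lemma weights_grid N T :
  0 <= T <= (p + q) ^ N ->
  exists A, S A ((p + q) ^ N - A) /\ A <= T <= A + Rmax p q ^ N.
Proof.
  revert T; induction N as [|N IH]; intros T HT.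
  - exists 0; simpl in *; split; [now rewrite Rminus_0_r | lra].
  - simpl in HT |- *.
    set (G := (p + q) ^ N) in *.
    set (m := Rmax p q).
    destruct (weights_scaled_axes N) as [SG0 S0G]; fold G in SG0, S0G.
    assert (HG : 0 < G) by (apply pow_lt; lra).
    assert (Hm : 0 <= m ^ N) by (apply pow_le; pose proof (Rmax_l p q); unfold m; lra).
    assert (Hpm : p <= m) by apply Rmax_l.
    assert (Hqm : q <= m) by apply Rmax_r.
    destruct (Rle_or_lt T (p * G)) as [Hlow|Hhigh].
    + assert (ET : p * (T / p) = T) by (field; lra).
      destruct (IH (T / p)) as [A [SA [HA1 HA2]]]; [split; nra|].
      fold m in HA2.
      exists (p * A); split; [|split].
      * eapply weights_mix; [exact SA | exact S0G | ring | ring].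
      * nra.
      * assert (p * m ^ N <= m * m ^ N) by (apply Rmult_le_compat_r; lra).
        nra.
    + assert (ET : q * ((T - p * G) / q) = T - p * G) by (field; lra).
      destruct (IH ((T - p * G) / q)) as [A [SA [HA1 HA2]]]; [split; nra|].
      fold m in HA2.
      exists (p * G + q * A); split; [|split].
      * eapply weights_mix; [exact SG0 | exact SA | ring | ring].
      * nra.
      * assert (q * m ^ N <= m * m ^ N) by (apply Rmult_le_compat_r; lra).
        nra.
Qed.

Lemma weights_dense s d :
  0 <= s <= 1 -> 0 < d ->
  exists t G, 0 < G /\ Rabs (t - s) <= d /\ S (t * G) ((1 - t) * G).
Proof.
  intros Hs Hd.
  set (m := Rmax p q).
  assert (Hm0 : 0 < m) by (pose proof (Rmax_l p q); unfold m; lra).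
  assert (Hmpq : m < p + q) by (apply Rmax_lub_lt; lra).
  assert (Hratio : 0 <= m / (p + q) < 1).
  { assert (E : (p + q) * (m / (p + q)) = m) by (field; lra).
    split; nra. }
  destruct (pow_lt_1_zero (m / (p + q))) with (y := d) as [N HN];
    [rewrite Rabs_pos_eq; lra | exact Hd|].
  specialize (HN N (le_n N)).
  rewrite Rabs_pos_eq in HN by (apply pow_le; lra).
  set (G := (p + q) ^ N).
  assert (HG : 0 < G) by (apply pow_lt; lra).
  assert (HmN : m ^ N = (m / (p + q)) ^ N * G).
  { unfold G; rewrite <- Rpow_mult_distr; f_equal; field; lra. }
  destruct (weights_grid N (s * G)) as [A [SA [HA1 HA2]]]; [fold G; split; nra|].
  fold G m in SA, HA2.
  set (t := A / G).
  assert (Et : t * G = A) by (unfold t; field; lra).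
  exists t, G; split; [exact HG|split].
  - assert (Hts : (s - t) * G < d * G) by nra.
    rewrite Rabs_left1; nra.
  - rewrite Et.
    replace ((1 - t) * G) with (G - A) by lra.
    exact SA.
Qed.

End Weights.

Section TwoFunctions.

Variables (p q : R) (hp : 0 < p) (hq : 0 < q).
Variables (X : Type) (P : X -> Prop) (g h : X -> R).
Hypothesis mix : forall x y, P x -> P y ->
  exists z, P z /\ g z <= p * g x + q * g y /\ h z <= p * h x + q * h y.
Hypothesis cover : forall x, P x -> 0 <= g x \/ 0 <= h x.

Lemma segment_not_neg x y s :
  P x -> P y -> 0 <= s <= 1 ->
  ~ (s * g x + (1 - s) * g y < 0 /\ s * h x + (1 - s) * h y < 0).
Proof.
  intros Px Py Hs [Hg Hh].
  destruct (affine_neg_near _ _ _ Hg) as [dg [Hdg Hnear_g]].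
  destruct (affine_neg_near _ _ _ Hh) as [dh [Hdh Hnear_h]].
  set (S := fun A B => exists z, P z /\
              g z <= A * g x + B * g y /\ h z <= A * h x + B * h y).
  assert (S_mix : forall a b c d, S a b -> S c d -> S (p * a + q * c) (p * b + q * d)).
  { intros a b c d [z1 [Pz1 [Hg1 Hh1]]] [z2 [Pz2 [Hg2 Hh2]]].
    destruct (mix z1 z2 Pz1 Pz2) as [z [Pz [Hgz Hhz]]].
    exists z; repeat split; [exact Pz | nra | nra]. }
  destruct (weights_dense p q hp hq S) with (s := s) (d := Rmin dg dh)
    as [t [G [HG [Hts [z [Pz [Hgz Hhz]]]]]]];
    [exists x; repeat split; auto; lra | exists y; repeat split; auto; lra
    | exact S_mix | exact Hs | now apply Rmin_glb_lt |].
  assert (Hgt : t * g x + (1 - t) * g y < 0)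
    by (apply Hnear_g; pose proof (Rmin_l dg dh); lra).
  assert (Hht : t * h x + (1 - t) * h y < 0)
    by (apply Hnear_h; pose proof (Rmin_r dg dh); lra).
  destruct (cover z Pz); nra.
Qed.

Lemma two_function_combination :
  exists a, 0 <= a <= 1 /\ forall x, P x -> 0 <= a * g x + (1 - a) * h x.
Proof.
  set (L := fun l => exists x, P x /\ h x < 0 /\ l = - h x / (g x - h x)).
  set (U := fun u => exists y, P y /\ g y < 0 /\ u = h y / (h y - g y)).
  destruct (sup_between L U) as [a [Ha [HLa HaU]]].
  - intros l [x [Px [Hhx ->]]].
    destruct (cover x Px) as [Hgx|]; [|lra].
    assert (E : - h x / (g x - h x) * (g x - h x) = - h x) by (field; lra).
    nra.
  - intros u [y [Py [Hgy ->]]].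
    destruct (cover y Py) as [|Hhy]; [lra|].
    assert (E : h y / (h y - g y) * (h y - g y) = h y) by (field; lra).
    nra.
  - intros l u [x [Px [Hhx ->]]] [y [Py [Hgy ->]]].
    destruct (cover x Px) as [Hgx|]; [|lra].
    destruct (cover y Py) as [|Hhy]; [lra|].
    apply quadrant_ratio_le; auto.
    intros s Hs; apply segment_not_neg; auto.
  - exists a; split; [exact Ha|].
    intros x Px.
    destruct (Rlt_or_le (h x) 0) as [Hhx|Hhx];
      [|destruct (Rlt_or_le (g x) 0) as [Hgx|Hgx]].
    + destruct (cover x Px) as [Hgx|]; [|lra].
      assert (Hl := HLa _ (ex_intro _ x (conj Px (conj Hhx eq_refl)))).
      assert (E : - h x / (g x - h x) * (g x - h x) = - h x) by (field; lra).
      nra.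
    + assert (Hu := HaU _ (ex_intro _ x (conj Px (conj Hgx eq_refl)))).
      assert (E : h x / (h x - g x) * (h x - g x) = h x) by (field; lra).
      nra.
    + nra.
Qed.

End TwoFunctions.

Lemma sum_mix_le (p q : R) (mu a b c : nat -> R) (m : nat) :
  (forall i, (i <= m)%nat -> 0 <= mu i) ->
  (forall i, (i <= m)%nat -> a i <= p * b i + q * c i) ->
  sum_f_R0 (fun i => mu i * a i) m
  <= p * sum_f_R0 (fun i => mu i * b i) m + q * sum_f_R0 (fun i => mu i * c i) m.
Proof.
  intros Hmu Habc.
  induction m as [|m IH]; simpl.
  - assert (H := Habc 0%nat (le_n 0)); assert (H0 := Hmu 0%nat (le_n 0)); nra.
  - assert (H := Habc (S m) (le_n _)); assert (H0 := Hmu (S m) (le_n _)).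
    assert (IH' := IH (fun i Hi => Hmu i (le_S _ _ Hi))
                      (fun i Hi => Habc i (le_S _ _ Hi))).
    nra.
Qed.

Definition extend_weights (a : R) (mu : nat -> R) (m : nat) : nat -> R :=
  fun i => if (i <=? m)%nat then a * mu i else 1 - a.

Lemma sum_extend_weights (a : R) (mu F : nat -> R) (m : nat) :
  sum_f_R0 (fun i => extend_weights a mu m i * F i) (S m)
  = a * sum_f_R0 (fun i => mu i * F i) m + (1 - a) * F (S m).
Proof.
  rewrite tech5; unfold extend_weights.
  replace (S m <=? m)%nat with false by (symmetry; apply Nat.leb_gt; lia).
  rewrite scal_sum; f_equal.
  apply sum_eq; intros i Hi.
  replace (i <=? m)%nat with true by (symmetry; apply Nat.leb_le; exact Hi).
  ring.
Qed.

Definition jointly_opq_convex_on {X : Type} (p q : R) (P : X -> Prop)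
    (f : nat -> X -> R) (m : nat) : Prop :=
  forall x y, P x -> P y ->
    exists z, P z /\ forall i, (i <= m)%nat -> f i z <= p * f i x + q * f i y.

Section Family.

Variables (p q : R) (hp : 0 < p) (hq : 0 < q) (X : Type).

Lemma jointly_opq_convex_on_neg_part (P : X -> Prop) (f : nat -> X -> R) (m : nat) :
  jointly_opq_convex_on p q P f (S m) ->
  jointly_opq_convex_on p q (fun x => P x /\ f (S m) x < 0) f m.
Proof.
  intros Hconv x y [Px Hx] [Py Hy].
  destruct (Hconv x y Px Py) as [z [Pz Hz]].
  exists z; split.
  - split; [exact Pz|]. specialize (Hz (S m) (le_n _)). nra.
  - intros i Hi; apply Hz; lia.
Qed.

Lemma convex_combination_nonneg_on (m : nat) (P : X -> Prop) (f : nat -> X -> R) :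
  jointly_opq_convex_on p q P f m ->
  (forall x, P x -> exists i, (i <= m)%nat /\ 0 <= f i x) ->
  exists lam, (forall i, (i <= m)%nat -> 0 <= lam i) /\ sum_f_R0 lam m = 1 /\
    forall x, P x -> 0 <= sum_f_R0 (fun i => lam i * f i x) m.
Proof.
  revert P; induction m as [|m IH]; intros P Hconv Hcover.
  - exists (fun _ => 1); simpl; split; [intros; lra | split; [reflexivity|]].
    intros x Px; destruct (Hcover x Px) as [i [Hi Hfi]].
    replace i with 0%nat in Hfi by lia; lra.
  - destruct (IH _ (jointly_opq_convex_on_neg_part P f m Hconv))
      as [mu [Hmu0 [Hmu1 Hmu]]].
    { intros x [Px Hx]; destruct (Hcover x Px) as [i [Hi Hfi]].
      exists i; split; [|exact Hfi].
      destruct (Nat.eq_dec i (S m)) as [->|]; [lra | lia]. }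
    set (g := fun x => sum_f_R0 (fun i => mu i * f i x) m).
    destruct (two_function_combination p q hp hq X P g (f (S m))) as [a [Ha Hag]].
    + intros x y Px Py; destruct (Hconv x y Px Py) as [z [Pz Hz]].
      exists z; repeat split; [exact Pz | | apply Hz; lia].
      apply sum_mix_le; [exact Hmu0 | intros i Hi; apply Hz; lia].
    + intros x Px; destruct (Rlt_or_le (f (S m) x) 0); [left | now right].
      now apply Hmu.
    + exists (extend_weights a mu m); repeat split.
      * intros i Hi; unfold extend_weights.
        destruct (Nat.leb_spec i m); [apply Rmult_le_pos; auto; lra | lra].
      * rewrite (sum_eq _ (fun i => extend_weights a mu m i * 1)) by (intros; ring).
        rewrite sum_extend_weights, (sum_eq _ mu) by (intros; ring).
        rewrite Hmu1; ring.
      * intros x Px; rewrite sum_extend_weights; exact (Hag x Px).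
Qed.

End Family.

Lemma maxn_R_attained (g : nat -> R) (m : nat) :
  exists i, (i <= m)%nat /\ maxn_R g (S m) = g i.
Proof.
  induction m as [|m [i [Hi He]]]; [now exists 0%nat|].
  change (maxn_R g (S (S m))) with (Rmax (maxn_R g (S m)) (g (S m))).
  unfold Rmax; destruct Rle_dec.
  - exists (S m); split; auto.
  - exists i; split; auto.
Qed.

Theorem theorem3p3 (X : Type) (x0 : X) (op : X -> X -> X) (p q : R)
  (hp : 0 < p) (hq : 0 < q) (n : nat) (hn : (1 <= n)%nat)
  (f : nat -> X -> R)
  (hconv : forall i, (i < n)%nat -> opq_convex op p q (f i))
  (hmax : forall x : X, 0 <= maxn_R (fun i => f i x) n) :
  exists lam : nat -> R,
    (forall i, (i < n)%nat -> 0 <= lam i) /\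
    sum_f_R0 lam (n - 1) = 1 /\
    (forall x : X, 0 <= sum_f_R0 (fun i => lam i * f i x) (n - 1)).
Proof.
  destruct n as [|m]; [lia|].
  replace (S m - 1)%nat with m by lia.
  destruct (convex_combination_nonneg_on p q hp hq X m (fun _ => True) f)
    as [lam [Hlam0 [Hlam1 Hlam]]].
  - intros x y _ _; exists (op x y); split; [exact I|].
    intros i Hi; apply hconv; lia.
  - intros x _; destruct (maxn_R_attained (fun i => f i x) m) as [i [Hi He]].
    exists i; split; [exact Hi|]. rewrite <- He; apply hmax.
  - exists lam; repeat split; [intros i Hi; apply Hlam0; lia | exact Hlam1 |].
    intros x; now apply Hlam.
Qed.
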